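(* Assume $p,q\in[0,1]$. For all $n\ge2$, almost surely, $$\widetilde M_n-\widetilde L_n\le Y_n-Z_n\le M_n.$$
   Context: Ulam–Harris labels: $\mathcal U_n=\mathbb N^n$ ($n\ge0$, $\mathcal U_0=\{\emptyset\}$), $\mathcal U=\bigcup_{n\ge0}\mathcal U_n$; for $u=u_1\dots u_k$ write $ui=u_1\dots u_ki$. Let $(\xi_u)_{u\in\mathcal U}$ be i.i.d. Poisson with mean $1+p$, and $(\delta_{u,v})_{u,v\in\mathcal U}$, $(\mu_{\{u,v\}})_{u\ne v\in\mathcal U}$ i.i.d. Bernoulli with mean $q$, all independent. The process $\mathcal G(p,q)=(G_n)_{n\ge0}$, $G_n=(V_n,E_n)$: $G_0=(\{\emptyset\},\emptyset)$, and $I_m=V_m\cap\mathcal U_m$. Given $G_{n-1}$ ($n\ge1$): (1) for $u\in I_{n-1}$ let $\mathcal K_u=\{v\in V_{n-1}:d_{G_{n-1}}(u,v)=3\}$ and $\mathcal C_u=\{j\in\mathbb N:j\le\xi_u,\ \delta_{v,uj}=0\ \forall v\in\mathcal K_u\}$; let $\tilde G_n$ have vertex set $V_{n-1}\cup\{ui:u\in I_{n-1},i\in\mathcal C_u\}$ and edge set $E_{n-1}\cup\{\{u,ui\}:u\in I_{n-1},i\in\mathcal C_u\}$, and $\tilde I_n$ its set of vertices in $\mathcal U_n$. (2) For $u,v\in\tilde I_n$ write $u\overset{m}{\sim}v$ iff $d_{\tilde G_n}(u,v)=4$ and $\mu_{\{u,v\}}=1$; let $\sim$ be the equivalence relation on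 $\tilde I_n$ generated by $\overset m\sim$, and $\pi(u)$ the lexicographically smallest element of the class of $u$. Then $V_n=V_{n-1}\cup\{\pi(u):u\in\tilde I_n\}$, $E_n=E_{n-1}\cup\{\{v,\pi(vi)\}:v\in I_{n-1},i\in\mathcal C_v\}$. Let $Z_n=|I_n|$ and $Y_n=\sum_{u\in I_{n-1}}|\mathcal C_u|=|\tilde I_n|$. For $\tilde u\in\tilde I_n$, $\tilde\alpha(\tilde u)=\{\tilde u\}\cup\bigcup_{1\le j\le n}\{x\in I_{n-j}:d_{\tilde G_n}(x,\tilde u)=j\}$ and $\tilde\alpha_2(\tilde u)=\tilde\alpha(\tilde u)\cap I_{n-2}$; $\tilde J^{(2)}_n=\{\tilde u\in\tilde I_n:|\tilde\alpha_2(\tilde u)|=1\}$. $M_n=|\{\{u,v\}:u,v\in\tilde I_n,\ u\overset m\sim v\}|$, $\widetilde M_n=|\{\{u,v\}:u,v\in\tilde J^{(2)}_n,\ u\overset m\sim v\}|$, and $\widetilde L_n=|\{(u,v,w)\in(\tilde J^{(2)}_n)^3:u\overset m\sim v,\ v\overset m\sim w,\ u\ne w\}|$. *)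

From HB Require Import structures.
From mathcomp Require Import all_boot all_order all_algebra.
From mathcomp Require Import all_classical all_reals all_analysis.
Set Implicit Arguments. Unset Strict Implicit. Unset Printing Implicit Defensive.
Import Order.TTheory GRing.Theory Num.Theory.

(* A label u = u_1 ... u_k is a sequence of positive naturals; u i = rcons u i. *)
Definition label := seq nat.

Fixpoint lexlt (s t : label) : bool :=
  match s, t with
  | [::], [::] => false
  | [::], _ :: _ => true
  | _ :: _, [::] => false
  | x :: s', y :: t' => (x < y)%N || ((x == y) && lexlt s' t')
  end.

Definition lexmin (a b : label) : label := if lexlt b a then b else a.

Definition graph := (seq label * seq (label * label))%type.

Definition gadj (G : graph) : rel label :=
  fun x y => ((x, y) \in G.2) || ((y, x) \in G.2).

(* vertices of V reachable from x by a path of at most k r-steps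
   (all intermediate/terminal vertices taken in V) *)
Fixpoint rball (V : seq label) (r : rel label) (x : label) (k : nat) : seq label :=
  if k is k'.+1 then
    let B := rball V r x k' in B ++ [seq y <- V | has (fun z => r z y) B]
  else [:: x].

Definition dist_is (G : graph) (x y : label) (k : nat) : bool :=
  if k is k'.+1 then
    (y \in rball G.1 (gadj G) x k) && (y \notin rball G.1 (gadj G) x k')
  else y == x.

Definition level (V : seq label) (m : nat) : seq label :=
  [seq u <- V | size u == m].

Section Process.
(* realization: xi u = xi_u, delta v w = delta_{v,w},
   mu u v = mu_{{u,v}} for u <lex v (unordered pairs are represented by
   their lexicographically ordered version) *)
Variables (xi : label -> nat) (delta : label -> label -> bool)
          (mu : label -> label -> bool).

Definition mupair (u v : label) : bool :=
  if lexlt u v then mu u v else mu v u.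

Definition Kset (G : graph) (u : label) : seq label :=
  [seq v <- G.1 | dist_is G u v 3].

Definition Cset (G : graph) (u : label) : seq nat :=
  [seq j <- iota 1 (xi u) | all (fun v => ~~ delta v (rcons u j)) (Kset G u)].

Definition tildeG (n : nat) (G : graph) : graph :=
  let I := level G.1 n.-1 in
  (G.1 ++ [seq rcons u j | u <- I, j <- Cset G u],
   G.2 ++ [seq (u, rcons u j) | u <- I, j <- Cset G u]).

Definition tildeI (n : nat) (G : graph) : seq label :=
  undup (level (tildeG n G).1 n).

Definition msim (n : nat) (G : graph) (u v : label) : bool :=
  dist_is (tildeG n G) u v 4 && mupair u v.

(* class of u for the equivalence relation generated by ~m on tilde I_n *)
Definition mclass (n : nat) (G : graph) (u : label) : seq label :=
  let It := tildeI n G in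
  rball It (fun a b => msim n G a b || msim n G b a) u (size It).

Definition piu (n : nat) (G : graph) (u : label) : label :=
  foldr lexmin u (mclass n G u).

Definition step (n : nat) (G : graph) : graph :=
  let I := level G.1 n.-1 in
  (undup (G.1 ++ [seq piu n G u | u <- tildeI n G]),
   G.2 ++ [seq (v, piu n G (rcons v i)) | v <- I, i <- Cset G v]).

Fixpoint proc (n : nat) : graph :=
  if n is n'.+1 then step n'.+1 (proc n') else ([:: [::]], [::]).

Definition Iset (m : nat) : seq label := level (proc m).1 m.

Definition Zn (n : nat) : nat := size (undup (Iset n)).

Definition Yn (n : nat) : nat :=
  \sum_(u <- Iset n.-1) size (Cset (proc n.-1) u).

Definition Gt (n : nat) : graph := tildeG n (proc n.-1).
Definition It (n : nat) : seq label := tildeI n (proc n.-1).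
Definition ms (n : nat) (u v : label) : bool := msim n (proc n.-1) u v.

Definition alphat (n : nat) (u : label) : seq label :=
  u :: flatten [seq [seq x <- Iset (n - j) | dist_is (Gt n) x u j]
               | j <- iota 1 n].

Definition alpha2 (n : nat) (u : label) : seq label :=
  undup [seq x <- alphat n u | x \in Iset (n - 2)].

Definition Jt (n : nat) : seq label :=
  [seq u <- It n | size (alpha2 n u) == 1%N].

Definition npairs (n : nat) (s : seq label) : nat :=
  size [seq uv <- [seq (u, v) | u <- s, v <- s]
       | lexlt uv.1 uv.2 && (ms n uv.1 uv.2 || ms n uv.2 uv.1)].

Definition Mn (n : nat) : nat := npairs n (It n).
Definition Mtn (n : nat) : nat := npairs n (Jt n).

Definition Ltn (n : nat) : nat :=
  size [seq t <- flatten [seq [seq (u, v, w) | v <- Jt n, w <- Jt n] | u <- Jt n]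
       | [&& ms n t.1.1 t.1.2, ms n t.1.2 t.2 & t.1.1 != t.2]].

End Process.

Definition lemma5p1_ineq (xi : label -> nat) (delta mu : label -> label -> bool)
  (n : nat) : Prop :=
  ((Mtn xi delta mu n)%:Z - (Ltn xi delta mu n)%:Z
     <= (Yn xi delta mu n)%:Z - (Zn xi delta mu n)%:Z
     <= (Mn xi delta mu n)%:Z)%R.

(* index set of the whole random family: xi_u, delta_{u,v}, mu_{u,v} *)
Definition ridx := ((label + (label * label)) + (label * label))%type.

Definition ridx_valid (i : ridx) : bool :=
  match i with inr (u, v) => lexlt u v | _ => true end.

Definition joint_family (T : Type) (xi : label -> T -> nat)
  (delta mu : label -> label -> T -> bool) (i : ridx) (t : T) : nat :=
  match i with
  | inl (inl u) => xi u t
  | inl (inr (u, v)) => nat_of_bool (delta u v t)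
  | inr (u, v) => nat_of_bool (mu u v t)
  end.

Local Open Scope classical_set_scope.
Local Open Scope ring_scope.

Definition mutually_independent (R : realType) (d : measure_display)
  (T : measurableType d) (P : probability T R) (I : eqType)
  (valid : pred I) (X : I -> T -> nat) : Prop :=
  forall (s : seq I) (k : I -> nat), uniq s -> all valid s ->
    P (\bigcap_(i in [set` s]) [set t | X i t = k i]) =
    (\prod_(i <- s) P [set t | X i t = k i])%E.

Definition model (R : realType) (d : measure_display) (T : measurableType d)
  (P : probability T R) (p q : R) (xi : label -> T -> nat)
  (delta mu : label -> label -> T -> bool) : Prop :=
  [/\ (forall i k, measurable [set t | joint_family xi delta mu i t = k]),
      (forall u k, P [set t | xi u t = k] =
         (expR (- (1 + p)) * (1 + p) ^+ k / (k`!)%:R)%:E),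
      (forall u v, P [set t | delta u v t = true] = q%:E),
      (forall u v, lexlt u v -> P [set t | mu u v t = true] = q%:E)
    & mutually_independent P ridx_valid (joint_family xi delta mu)].

From Pilot Require Import Defs.
From HB Require Import structures.
From mathcomp Require Import all_boot all_order all_algebra.
From mathcomp Require Import all_classical all_reals all_analysis.
From mathcomp Require Import zify.
Import Order.TTheory GRing.Theory Num.Theory.
Set Implicit Arguments. Unset Strict Implicit. Unset Printing Implicit Defensive.

(** The inequality holds for every realisation.  Let H be the graph on \tilde I_n whose edges are the pairs
   u ~m v; then Y_n = |\tilde I_n|, M_n is its number of edges, and Z_n its
   number of connected components, each collapsed onto its lexicographically
   least vertex.  Joining every other vertex to a parent closer to that least
   vertex gives a spanning forest, whence Y_n - Z_n <= M_n.  Conversely, an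
   edge of H inside \tilde J^(2)_n either extends, through another neighbour
   of one endpoint, to a path counted by \tilde L_n, or it is an isolated
   edge, a whole component whose non-least vertex it can be charged to; both
   assignments are injective, whence \tilde M_n <= \tilde L_n + Y_n - Z_n. *)

Lemma lexltxx s : lexlt s s = false.
Proof. by elim: s => //= x s ->; rewrite ltnn eqxx. Qed.

Lemma lexlt_trans s t u : lexlt s t -> lexlt t u -> lexlt s u.
Proof.
elim: s t u => [|x s IH] [|y t] [|z u] //=.
case/orP=> [xy|/andP[/eqP <- st]]; case/orP=> [yz|/andP[/eqP <- tu]].
- by rewrite (ltn_trans xy yz).
- by rewrite xy.
- by rewrite yz.
- by rewrite eqxx (IH _ _ st tu) orbT.
Qed.

Lemma lexlt_asym s t : lexlt s t -> lexlt t s = false.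
Proof. by move=> st; apply/negP=> /(lexlt_trans st); rewrite lexltxx. Qed.

Lemma lexlt_total s t : s != t -> lexlt s t || lexlt t s.
Proof.
elim: s t => [|x s IH] [|y t] //=.
case: (ltngtP x y) => //= <- st; apply: IH; apply: contra st => /eqP -> //.
Qed.

Lemma mem_foldr_lexmin a s : foldr lexmin a s \in a :: s.
Proof.
elim: s => [|x s IH] /=; first exact: mem_head.
rewrite /lexmin; case: ifP => _; last by rewrite !inE eqxx orbT.
by move: IH; rewrite !inE => /orP[] ->; rewrite ?orbT.
Qed.

Lemma foldr_lexmin_min a s y : y \in a :: s -> ~~ lexlt y (foldr lexmin a s).
Proof.
elim: s y => [|x s IH] y /=; first by rewrite inE => /eqP ->; rewrite lexltxx.
rewrite 2!in_cons orbCA -in_cons /lexmin.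
set m := foldr lexmin a s in IH *; case: ifP => mx /orP[/eqP ->|ys].
- by rewrite lexlt_asym.
- exact: IH.
- by rewrite lexltxx.
apply/negP => yx; have /negP := IH _ ys; apply.
have [<-//|xm] := eqVneq x m.
by case/orP: (lexlt_total xm) => [/(lexlt_trans yx)//|]; rewrite mx.
Qed.

Lemma lexlt_min_unique (S : pred label) m1 m2 : m1 \in S -> m2 \in S ->
  (forall y, y \in S -> ~~ lexlt y m1) -> (forall y, y \in S -> ~~ lexlt y m2) ->
  m1 = m2.
Proof.
move=> S1 S2 min1 min2; apply/eqP/negP => /negP/lexlt_total/orP[lt|lt].
  by have := min2 _ S1; rewrite lt.
by have := min1 _ S2; rewrite lt.
Qed.

Lemma lexlt_pair_eq a b c d : lexlt a b -> lexlt c d ->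
  (a = c /\ b = d) \/ (a = d /\ b = c) -> (a, b) = (c, d).
Proof. by move=> ab cd [[-> ->]//|[ad bc]]; subst; rewrite lexlt_asym in ab. Qed.

Definition paths2 (J : seq label) (g : rel label) :=
  [seq t <- flatten [seq [seq (u, v, w) | v <- J, w <- J] | u <- J]
  | [&& g t.1.1 t.1.2, g t.1.2 t.2 & t.1.1 != t.2]].

Lemma mem_paths2 J g u v w :
  ((u, v, w) \in paths2 J g) = [&& u \in J, v \in J, w \in J, g u v, g v w & u != w].
Proof.
rewrite mem_filter /=.
have -> : ((u, v, w) \in flatten [seq [seq (u, v, w) | v <- J, w <- J] | u <- J])
    = [&& u \in J, v \in J & w \in J].
  apply/flatten_mapP/and3P => [[x xJ /allpairsP[[y z] [/= yJ zJ [-> -> ->]]]] //|].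
  by case=> uJ vJ wJ; exists u => //; apply/allpairsP; exists (v, w).
by rewrite andbC -!andbA.
Qed.

Section Components.
Variables (V : seq label) (e : rel label).
Local Notation ball := (rball V e).
Local Notation N := (size V).

Lemma rballS x k y : (y \in ball x k.+1) =
  (y \in ball x k) || (y \in V) && has (e^~ y) (ball x k).
Proof. by rewrite /= mem_cat mem_filter andbC. Qed.

Lemma rball0 x y : (y \in ball x 0) = (y == x).
Proof. by rewrite inE. Qed.

Lemma rball_mono x k l : k <= l -> {subset ball x k <= ball x l}.
Proof.
elim: l => [|l IH]; first by rewrite leqn0 => /eqP ->.
rewrite leq_eqVlt => /orP[/eqP -> //|kl] y yk.
by rewrite rballS (IH kl y yk).
Qed.

Lemma rball_center x k : x \in ball x k.
Proof. by apply: (rball_mono (leq0n k)); rewrite rball0. Qed.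

Lemma rball_subV x k : x \in V -> {subset ball x k <= V}.
Proof.
move=> xV; elim: k => [|k IH] y; first by rewrite rball0 => /eqP ->.
by rewrite rballS => /orP[/IH|/andP[]].
Qed.

Lemma rball_trans x y z a b : y \in ball x a -> z \in ball y b -> z \in ball x (a + b).
Proof.
move=> yx; elim: b z => [|b IH] z; first by rewrite rball0 addn0 => /eqP ->.
rewrite addnS !rballS => /orP[/IH -> //|/andP[-> /hasP[w /IH wx ewz]]].
by apply/orP; right; apply/hasP; exists w.
Qed.

Lemma rball_stable x j : {subset ball x j.+1 <= ball x j} ->
  forall m, {subset ball x (j + m) <= ball x j}.
Proof.
move=> st; elim=> [|m IH] y; first by rewrite addn0.
rewrite addnS rballS => /orP[/IH //|/andP[yV /hasP[z /IH zb ezy]]].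
by apply: st; rewrite rballS yV; apply/orP; right; apply/hasP; exists z.
Qed.

Lemma rball_grow x k : (exists2 j, j <= k & {subset ball x j.+1 <= ball x j})
  \/ k < size (undup (ball x k)).
Proof.
elim: k => [|k [[j jk st]|IH]]; first by right.
  by left; exists j => //; apply: leqW.
case A: (all (mem (ball x k)) (ball x k.+1)).
  by left; exists k => // y; move/allP: A; apply.
right; move/negbT: A; rewrite -has_predC => /hasP[y yk1 /= nyk].
apply: (leq_ltn_trans IH).
suff: size (y :: undup (ball x k)) <= size (undup (ball x k.+1)) by [].
apply: uniq_leq_size; first by rewrite /= undup_uniq mem_undup nyk.
move=> z; rewrite inE !mem_undup => /orP[/eqP ->|] //.
exact: rball_mono.
Qed.

Lemma rball_saturate x k : x \in V -> {subset ball x k <= ball x N}.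
Proof.
move=> xV.
case: (rball_grow x N) => [[j jN st]|lt]; last first.
  suff: size (undup (ball x N)) <= N by rewrite leqNgt lt.
  apply: uniq_leq_size; first exact: undup_uniq.
  by move=> y; rewrite mem_undup; apply: rball_subV.
move=> y yk; apply: (rball_mono jN).
have [kj|jk] := leqP k j; first exact: (rball_mono kj).
by apply: (rball_stable (m := k - j) st); rewrite subnKC ?(ltnW jk).
Qed.

Hypothesis e_sym : symmetric e.

Lemma rball_sym x y a : x \in V -> y \in ball x a -> x \in ball y a.
Proof.
move=> xV; elim: a y => [|a IH] y; first by rewrite !rball0 eq_sym.
rewrite rballS => /orP[/IH /(rball_mono (leqnSn a)) //|/andP[yV /hasP[z zb ezy]]].
have zy : z \in ball y 1.
  by rewrite rballS (rball_subV xV zb) /= e_sym ezy orbT.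
by rewrite -add1n; apply: rball_trans zy (IH _ zb).
Qed.

Definition rep x := foldr lexmin x (ball x N).

Lemma rep_reach x : rep x \in ball x N.
Proof.
rewrite /rep; have := mem_foldr_lexmin x (ball x N).
by rewrite inE => /orP[/eqP ->|//]; apply: rball_center.
Qed.

Lemma rep_min x y : y \in ball x N -> ~~ lexlt y (rep x).
Proof. by move=> yx; apply: foldr_lexmin_min; rewrite inE yx orbT. Qed.

Lemma rep_V x : x \in V -> rep x \in V.
Proof. by move=> xV; apply: rball_subV xV _ (rep_reach x). Qed.

Lemma reach_rep x : x \in V -> x \in ball (rep x) N.
Proof. by move=> xV; apply: rball_sym (rep_reach x). Qed.

Lemma rep_eq x y : x \in V -> y \in ball x N -> rep x = rep y.
Proof.
move=> xV yx; have yV := rball_subV xV yx.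
have same_comp z : (z \in ball y N) = (z \in ball x N).
  apply/idP/idP => [zy|zx].
    by apply: (rball_saturate xV); apply: rball_trans yx zy.
  by apply: (rball_saturate yV); apply: rball_trans (rball_sym xV yx) zx.
apply: (@lexlt_min_unique (mem (ball x N))).
- exact: rep_reach.
- by rewrite inE -same_comp rep_reach.
- by move=> z; apply: rep_min.
- by move=> z; rewrite inE -same_comp; apply: rep_min.
Qed.

Lemma rep_idem x : x \in V -> rep (rep x) = rep x.
Proof. by move=> xV; rewrite -(rep_eq xV (rep_reach x)). Qed.

Lemma rep_adj x y : x \in V -> y \in V -> e x y -> rep x = rep y.
Proof.
move=> xV yV exy; apply: rep_eq => //; apply: (rball_saturate (k := 1)) => //.
by rewrite rballS yV /= exy orbT.
Qed.

Lemma rep_rball x z k : x \in V -> z \in ball (rep x) k -> rep z = rep x.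
Proof.
move=> xV zb; have rV := rep_V xV.
by rewrite -(rep_eq rV (rball_saturate rV zb)) rep_idem.
Qed.

Definition ncomp := size (undup (map rep V)).

Lemma ncomp_le_size : ncomp <= N.
Proof. by rewrite (leq_trans (size_undup _)) ?size_map. Qed.

Lemma count_nonrep : uniq V -> count (fun x => rep x != x) V = N - ncomp.
Proof.
move=> uV; have fixed : count (fun x => rep x == x) V = ncomp.
  rewrite -size_filter; apply/eqP; rewrite eqn_leq; apply/andP; split.
    apply: uniq_leq_size; first exact: filter_uniq.
    move=> x; rewrite mem_filter mem_undup => /andP[/eqP rx xV].
    by rewrite -{1}rx map_f.
  apply: uniq_leq_size; first exact: undup_uniq.
  move=> y; rewrite mem_undup => /mapP[x xV ->].
  by rewrite mem_filter rep_idem // eqxx rep_V.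
rewrite -(count_predC (fun x => rep x == x)) fixed addKn.
exact: eq_count.
Qed.

Definition edges (s : seq label) :=
  [seq uv <- [seq (u, v) | u <- s, v <- s] | lexlt uv.1 uv.2 && e uv.1 uv.2].

Lemma mem_edges s a b :
  ((a, b) \in edges s) = [&& a \in s, b \in s, lexlt a b & e a b].
Proof.
rewrite mem_filter /=.
have -> : ((a, b) \in [seq (u, v) | u <- s, v <- s]) = (a \in s) && (b \in s).
  by apply/allpairsP/andP => [[[u v] [/= us vs [-> ->]]] //|[aS bS]]; exists (a, b).
by rewrite andbC -!andbA.
Qed.

Lemma edges_uniq s : uniq s -> uniq (edges s).
Proof.
move=> us; apply/filter_uniq/allpairs_uniq => //.
by move=> [a b] [c d] _ _ /= [-> ->].
Qed.

Definition depth x := find (fun k => x \in ball (rep x) k) (iota 0 N.+1).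

Lemma depth_reach x : x \in V -> x \in ball (rep x) (depth x).
Proof.
move=> xV.
have hs : has (fun k => x \in ball (rep x) k) (iota 0 N.+1).
  by apply/hasP; exists N; [rewrite mem_iota ltnSn | exact: reach_rep].
have := nth_find 0 hs; rewrite nth_iota ?add0n //.
by move: hs; rewrite has_find size_iota.
Qed.

Lemma depth_min x k : x \in ball (rep x) k -> depth x <= k.
Proof.
move=> xk; rewrite leqNgt; apply/negP => kd.
have kN : k < N.+1.
  by rewrite (leq_trans kd) // -[N.+1](size_iota 0) find_size.
by have := before_find 0 kd; rewrite nth_iota // add0n xk.
Qed.

Definition parent x :=
  let B := ball (rep x) (depth x).-1 in nth x B (find (e^~ x) B).

Lemma parent_spec x : x \in V -> rep x != x ->
  [/\ parent x \in V, e (parent x) x & depth (parent x) < depth x].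
Proof.
move=> xV nx; have rV := rep_V xV.
have := depth_reach xV; rewrite /parent.
case Ed: (depth x) => [|d] /=; first by rewrite rball0 => /eqP xr; rewrite -xr eqxx in nx.
rewrite rballS => /orP[xd|/andP[_ hs]].
  by have := depth_min xd; rewrite Ed ltnn.
have pB : nth x (ball (rep x) d) (find (e^~ x) (ball (rep x) d)) \in ball (rep x) d.
  by rewrite mem_nth // -has_find.
have pe := nth_find x hs.
set p := nth x _ _ in pB pe *.
split; [exact: rball_subV rV _ pB | exact: pe |].
by rewrite ltnS depth_min // (rep_rball xV pB).
Qed.

(* x |-> {x, parent x} is injective since depth decreases strictly along
   parents: the non-representatives index the edges of a spanning forest. *)
Lemma nonrep_le_edges : uniq V -> N - ncomp <= size (edges V).
Proof.
move=> uV; rewrite -count_nonrep // -size_filter.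
pose f x := if lexlt x (parent x) then (x, parent x) else (parent x, x).
rewrite -(size_map f); apply: uniq_leq_size.
  rewrite map_inj_in_uniq ?filter_uniq // => x y.
  rewrite !mem_filter => /andP[nx xV] /andP[ny yV] fxy.
  have [_ _ dx] := parent_spec xV nx.
  have [_ _ dy] := parent_spec yV ny.
  have : (x = y /\ parent x = parent y) \/ (x = parent y /\ parent x = y).
    by move: fxy; rewrite /f; do 2!case: ifP => _; case; auto.
  case=> [[//]|[xp px]].
  by move: dy; rewrite -xp -px => /(ltn_trans dx); rewrite ltnn.
move=> uv /mapP[x]; rewrite mem_filter => /andP[nx xV] ->.
have [pV pe dx] := parent_spec xV nx.
have xp : x != parent x by apply: contraTneq dx => <-; rewrite ltnn.
rewrite /f; case: ifP => lt; rewrite mem_edges xV pV.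
  by rewrite lt e_sym pe.
by have := lexlt_total xp; rewrite lt /= => ->.
Qed.

Section Restriction.
Variables (J : seq label) (g : rel label).
Hypotheses (J_uniq : uniq J) (JV : {subset J <= V})
  (gJ : {in J &, forall a b, g a b = e a b}).

Definition has_other_nbr a b := has (fun w => e a w && (w != b)) J.
Definition other_nbr a b := nth a J (find (fun w => e a w && (w != b)) J).
Definition isolated (uv : label * label) :=
  ~~ has_other_nbr uv.1 uv.2 && ~~ has_other_nbr uv.2 uv.1.

Lemma other_nbrP a b : has_other_nbr a b ->
  [/\ other_nbr a b \in J, e a (other_nbr a b) & other_nbr a b != b].
Proof.
move=> ab; have /andP[eaw wb] := nth_find a ab.
by split => //; rewrite mem_nth // -has_find.
Qed.

Lemma isolated_nbr a b y : isolated (a, b) -> y \in J ->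
  (e a y -> y = b) /\ (e b y -> y = a).
Proof.
move=> /andP[/hasPn na /hasPn nb] yJ.
by split=> ey; apply/eqP; [move: (na _ yJ) | move: (nb _ yJ)]; rewrite ey negbK.
Qed.

(* An edge {a, b} with a < b and another neighbour w of a (resp. b) extends to
   the path (b, a, w) (resp. (a, b, w)); the first two entries recover it. *)
Lemma nonisolated_le_paths2 : count (predC isolated) (edges J) <= size (paths2 J g).
Proof.
pose ext uv := if has_other_nbr uv.1 uv.2 then (uv.2, uv.1, other_nbr uv.1 uv.2)
               else (uv.1, uv.2, other_nbr uv.2 uv.1).
rewrite -size_filter -(size_map ext); apply: uniq_leq_size.
  rewrite map_inj_in_uniq; first exact/filter_uniq/edges_uniq.
  move=> -[a b] [c d].
  rewrite !(mem_filter (predC isolated)) !mem_edges.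
  move=> /andP[_ /and4P[_ _ ab _]] /andP[_ /and4P[_ _ cd _]] ext_eq.
  apply: lexlt_pair_eq => //.
  by move: ext_eq; rewrite /ext /=; do 2!case: ifP => _; case; auto.
move=> t /mapP[[a b]]; rewrite mem_filter mem_edges.
move=> /andP[ni /and4P[aJ bJ _ eab]] ->; rewrite /ext /=.
case: ifP => [ha|/negbT hb].
  have [wJ eaw wb] := other_nbrP ha.
  by rewrite mem_paths2 aJ bJ wJ !gJ // e_sym eab eaw eq_sym.
have /other_nbrP[wJ ebw wa] : has_other_nbr b a.
  by move: ni; rewrite /= /isolated hb /= negbK.
by rewrite mem_paths2 aJ bJ wJ !gJ // eab ebw eq_sym.
Qed.

(* An isolated edge is a whole component, so one endpoint is not its
   representative, and that endpoint determines the edge. *)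
Lemma isolated_le_nonrep : count isolated (edges J) <= count (fun x => rep x != x) V.
Proof.
pose end_nonrep uv := if rep uv.1 != uv.1 then uv.1 else uv.2.
have end_nonrepE uv : (end_nonrep uv == uv.1) || (end_nonrep uv == uv.2).
  by rewrite /end_nonrep; case: ifP; rewrite eqxx ?orbT.
rewrite -!size_filter -(size_map end_nonrep); apply: uniq_leq_size.
  rewrite map_inj_in_uniq; first exact/filter_uniq/edges_uniq.
  move=> -[a b] [c d].
  rewrite !(mem_filter isolated) !mem_edges.
  move=> /andP[ia /and4P[aJ bJ ab eab]] /andP[_ /and4P[cJ dJ cd ecd]] same_end.
  apply: lexlt_pair_eq => //.
  move: (end_nonrepE (a, b)) (end_nonrepE (c, d)); rewrite same_end /=.
  move: (end_nonrep (c, d)) => x /orP[]/eqP-> /orP[]/eqP xcd.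
  - subst c; left; split => //; exact/esym/((isolated_nbr ia dJ).1 ecd).
  - subst d; right; split => //; rewrite e_sym in ecd; exact/esym/((isolated_nbr ia cJ).1 ecd).
  - subst c; right; split => //; exact/esym/((isolated_nbr ia dJ).2 ecd).
  - subst d; left; split => //; rewrite e_sym in ecd; exact/esym/((isolated_nbr ia cJ).2 ecd).
move=> x /mapP[[a b]]; rewrite mem_filter mem_edges.
move=> /andP[_ /and4P[aJ bJ ab eab]] ->; rewrite /end_nonrep /= mem_filter.
case: ifP => [-> /=|/negbFE/eqP ra]; first exact: JV.
rewrite JV // andbT -(rep_adj (JV aJ) (JV bJ) eab) ra.
by apply: contraTneq ab => ->; rewrite lexltxx.
Qed.

Lemma edges_le_paths2_nonrep : uniq V ->
  size (edges J) <= size (paths2 J g) + (N - ncomp).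
Proof.
move=> uV; rewrite -count_nonrep // -(count_predC isolated) addnC.
by rewrite leq_add ?nonisolated_le_paths2 ?isolated_le_nonrep.
Qed.

End Restriction.

End Components.

Lemma rball_symE V (e : rel label) x y k : symmetric e ->
  x \in V -> y \in V -> (y \in rball V e x k) = (x \in rball V e y k).
Proof. by move=> e_sym xV yV; apply/idP/idP; apply: rball_sym. Qed.

Lemma gadj_sym G : symmetric (gadj G).
Proof. by move=> x y; rewrite /gadj orbC. Qed.

Lemma dist_is_sym G x y k : x \in G.1 -> y \in G.1 -> dist_is G x y k = dist_is G y x k.
Proof.
move=> xG yG; case: k => [|k]; first exact: eq_sym.
by congr (_ && ~~ _); apply: rball_symE => //; apply: gadj_sym.
Qed.

Lemma mupairC (mu : rel label) u v : mupair mu u v = mupair mu v u.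
Proof.
rewrite /mupair; have [->//|neq] := eqVneq u v.
by case/orP: (lexlt_total neq) => lt; rewrite lt (lexlt_asym lt).
Qed.

Lemma mem_level (V : seq label) m x : (x \in level V m) = (x \in V) && (size x == m).
Proof. by rewrite mem_filter andbC. Qed.

Section Realisation.
Variables (xi : label -> nat) (delta mu : label -> label -> bool).

Local Notation proc := (proc xi delta mu).
Local Notation tildeI := (tildeI xi delta).
Local Notation msim := (msim xi delta mu).

Definition madj n G a b := msim n G a b || msim n G b a.

Lemma madj_sym n G : symmetric (madj n G).
Proof. by move=> a b; rewrite /madj orbC. Qed.

Lemma piuE n G : piu xi delta mu n G =1 rep (tildeI n G) (madj n G).
Proof. by []. Qed.

Lemma size_tildeI n G x : x \in tildeI n G -> size x = n.
Proof. by rewrite mem_undup mem_level => /andP[_ /eqP]. Qed.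

Lemma size_proc m u : u \in (proc m).1 -> size u <= m.
Proof.
elim: m u => [|m IH] u; first by rewrite inE => /eqP ->.
rewrite /= mem_undup mem_cat => /orP[/IH/leqW //|/mapP[w wI ->]].
by rewrite piuE (size_tildeI (rep_V _ wI)).
Qed.

Lemma proc_uniq m : uniq (proc m).1.
Proof. by case: m => [|m] //; apply: undup_uniq. Qed.

Lemma msimC n G a b : a \in tildeI n G -> b \in tildeI n G -> msim n G a b = msim n G b a.
Proof.
rewrite !mem_undup !mem_level => /andP[aG _] /andP[bG _].
by rewrite /Defs.msim mupairC dist_is_sym.
Qed.

Definition children n :=
  [seq rcons u j | u <- level (proc n).1 n, j <- Cset xi delta (proc n) u].

Lemma mem_tildeI n : tildeI n.+1 (proc n) =i children n.
Proof.
move=> x; rewrite mem_undup mem_level /= mem_cat.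
apply/idP/idP => [/andP[/orP[/size_proc xn /eqP xSn|//]]|xch].
  by rewrite xSn ltnn in xn.
rewrite xch orbT /=; case/allpairsPdep: xch => u [j [uI _ ->]].
by move: uI; rewrite mem_level size_rcons => /andP[_ /eqP ->].
Qed.

Lemma Yn_tildeI n : Yn xi delta mu n.+1 = size (tildeI n.+1 (proc n)).
Proof.
have children_uniq : uniq (children n).
  apply: allpairs_uniq_dep => [||[u j] [u' j'] _ _ /= /rcons_inj [-> ->] //].
  - exact/filter_uniq/proc_uniq.
  - by move=> u _; apply/filter_uniq/iota_uniq.
rewrite (perm_size (uniq_perm (undup_uniq _) children_uniq (mem_tildeI n))).
by rewrite size_allpairs_dep sumnE big_map.
Qed.

Lemma Zn_ncomp n :
  Zn xi delta mu n.+1 = ncomp (tildeI n.+1 (proc n)) (madj n.+1 (proc n)).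
Proof.
apply/perm_size/uniq_perm; rewrite ?undup_uniq // => x.
rewrite !mem_undup mem_level /= mem_undup mem_cat.
apply/idP/idP => [/andP[/orP[/size_proc xn /eqP xSn|//]]|xm].
  by rewrite xSn ltnn in xn.
by rewrite xm orbT /=; case/mapP: xm => w wI ->; rewrite (size_tildeI (rep_V _ wI)).
Qed.

Lemma lemma5p1_ineq_realisation n : lemma5p1_ineq xi delta mu n.+1.
Proof.
set G := proc n; set V := tildeI n.+1 G; set J := Jt xi delta mu n.+1.
have V_uniq : uniq V := undup_uniq _.
have J_uniq : uniq J := filter_uniq _ V_uniq.
have JV : {subset J <= V} by move=> x; rewrite mem_filter => /andP[].
have msim_madj : {in J &, forall a b, msim n.+1 G a b = madj n.+1 G a b}.
  by move=> a b aJ bJ; rewrite /madj (msimC (JV _ aJ) (JV _ bJ)) orbb.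
have upper := nonrep_le_edges (@madj_sym n.+1 G) V_uniq.
have lower := edges_le_paths2_nonrep (@madj_sym n.+1 G) J_uniq JV msim_madj V_uniq.
have ncompV := ncomp_le_size V (madj n.+1 G).
rewrite /lemma5p1_ineq Yn_tildeI Zn_ncomp -/G -/V.
have -> : Mn xi delta mu n.+1 = size (edges (madj n.+1 G) V) by [].
have -> : Mtn xi delta mu n.+1 = size (edges (madj n.+1 G) J) by [].
have -> : Ltn xi delta mu n.+1 = size (paths2 J (msim n.+1 G)) by [].
by apply/andP; split; lia.
Qed.

End Realisation.

Local Open Scope ring_scope.

Theorem lemma5p1 (R : realType) (d : measure_display) (T : measurableType d)
  (P : probability T R) (p q : R)
  (xi : label -> T -> nat) (delta mu : label -> label -> T -> bool) :
  0 <= p <= 1 -> 0 <= q <= 1 ->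
  model P p q xi delta mu ->
  forall n : nat, (2 <= n)%N ->
  {ae P, forall t, lemma5p1_ineq (fun u => xi u t) (fun u v => delta u v t)
                                 (fun u v => mu u v t) n}.
Proof.
move=> _ _ _ [|n] // _; apply: aeW => t.
exact: lemma5p1_ineq_realisation.
Qed.
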